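(* Let $N$ be a lattice, $\sigma\subset N_{\mathbb R}$ a strongly convex rational polyhedral cone, and $\Delta$ a rational simplicial subdivision of $\sigma$ with ray generators $v_1,\ldots,v_s$. If $\lambda\in\Delta$ is a face of every maximal cone of $\Delta$, then $H_\Delta=H_{\operatorname{lk}\lambda}$, and $H_{\operatorname{lk}\gamma}=H_{\operatorname{lk}(\gamma+\lambda)}$ for every $\gamma\in\Delta$.
   Context: $v_1,\ldots,v_s$ are the primitive generators of the rays of $\Delta$, and $x^v$ ($v\in N$) denote monomials in the Laurent polynomial ring $\mathbb Z[N]$. ''$v_i\in\tau$'' means $v_i$ generates a ray of $\tau$. $H_\Delta=\sum_{\tau\in\Delta}\bigl(\prod_{v_i\in\tau}x^{v_i}\prod_{v_j\notin\tau}(1-x^{v_j})\bigr)$. The link $\operatorname{lk}\tau$ is the set of $\gamma\in\Delta$ with $\gamma\cap\tau=0$ and $\gamma+\tau\in\Delta$; $v_j\in\operatorname{lk}\tau$ means $v_j$ generates a ray of some cone of $\operatorname{lk}\tau$; $H_{\operatorname{lk}\tau}=\sum_{\gamma\in\operatorname{lk}\tau}\bigl(\prod_{v_i\in\gamma}x^{v_i}\prod_{v_j\in\operatorname{lk}\tau,\,v_j\notin\gamma}(1-x^{v_j})\bigr)$. *)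

From HB Require Import structures.
From mathcomp Require Import all_boot all_order all_algebra.
From mathcomp Require Import fraction.
From mathcomp Require Import mpoly.
Set Implicit Arguments. Unset Strict Implicit. Unset Printing Implicit Defensive.
Import Order.TTheory GRing.Theory Num.Theory.
Local Open Scope ring_scope.

(* The lattice N is Z^n, realised as 'rV[int]_n; N_R = 'rV[R]_n for a real
   field R.  Cones of the simplicial fan Delta are encoded by their sets of
   ray indices tau : {set 'I_s}; the cone is the nonnegative span of the
   v_i, i \in tau. *)

Definition toR (R : realFieldType) (n : nat) (v : 'rV[int]_n) : 'rV[R]_n :=
  map_mx (fun z : int => z%:~R) v.

Definition in_cone (R : realFieldType) (n : nat) (I : finType)
    (w : I -> 'rV[int]_n) (A : {set I}) (x : 'rV[R]_n) : Prop :=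
  exists c : I -> R, (forall i, 0 <= c i) /\
    x = \sum_(i in A) c i *: toR R (w i).

Definition strongly_convex (R : realFieldType) (n : nat) (I : finType)
    (w : I -> 'rV[int]_n) : Prop :=
  forall x : 'rV[R]_n, in_cone w [set: I] x -> in_cone w [set: I] (- x) -> x = 0.

Definition primitive (n : nat) (v : 'rV[int]_n) : Prop :=
  v != 0 /\ forall (k : int) (u : 'rV[int]_n), v = k *: u -> `|k| = 1.

Definition lin_indep (R : realFieldType) (n s : nat) (v : 'I_s -> 'rV[int]_n)
    (tau : {set 'I_s}) : Prop :=
  forall c : 'I_s -> R, \sum_(i in tau) c i *: toR R (v i) = 0 ->
    forall i, i \in tau -> c i = 0.

Definition simplicial_subdivision (R : realFieldType) (n m s : nat)
    (w : 'I_m -> 'rV[int]_n) (v : 'I_s -> 'rV[int]_n)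
    (Delta : {set {set 'I_s}}) : Prop :=
  (forall i, primitive (v i)) /\
      (forall i, [set i] \in Delta) /\
      (forall tau tau' : {set 'I_s}, tau \in Delta -> tau' \subset tau -> tau' \in Delta) /\
      (forall tau : {set 'I_s}, tau \in Delta -> lin_indep R v tau) /\
      (forall tau tau' : {set 'I_s}, tau \in Delta -> tau' \in Delta ->
         forall x : 'rV[R]_n,
           (in_cone v tau x /\ in_cone v tau' x) <-> in_cone v (tau :&: tau') x) /\
      (forall x : 'rV[R]_n,
         in_cone w [set: 'I_m] x <-> exists2 tau : {set 'I_s}, tau \in Delta & in_cone v tau x).

Definition maximal_cone (s : nat) (Delta : {set {set 'I_s}}) (tau : {set 'I_s}) :=
  (tau \in Delta) && [forall tau' in Delta, (tau \subset tau') ==> (tau' == tau)].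

Definition lk (s : nat) (Delta : {set {set 'I_s}}) (tau : {set 'I_s}) :
    {set {set 'I_s}} :=
  [set gam in Delta | (gam :&: tau == set0) && (gam :|: tau \in Delta)].

Definition rays_of (s : nat) (S : {set {set 'I_s}}) : {set 'I_s} :=
  \bigcup_(gam in S) gam.

(* Z[N] is realised inside the fraction field of Z[x_1,...,x_n]:
   x^v = prod_k x_k^(v_k) (Laurent monomial). *)
Definition ZN (n : nat) := {fraction {mpoly int[n]}}.

Definition monom (n : nat) (v : 'rV[int]_n) : ZN n :=
  \prod_(k < n) ((@FracField.tofrac _ ('X_k : {mpoly int[n]})) ^ (v ord0 k)).

Definition Hpoly (n s : nat) (v : 'I_s -> 'rV[int]_n)
    (S : {set {set 'I_s}}) (V : {set 'I_s}) : ZN n :=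
  \sum_(tau in S) ((\prod_(i in tau) monom (v i)) *
                   \prod_(j in V :\: tau) (1 - monom (v j))).

Definition H_Delta (n s : nat) (v : 'I_s -> 'rV[int]_n) (Delta : {set {set 'I_s}}) :=
  Hpoly v Delta [set: 'I_s].

Definition H_lk (n s : nat) (v : 'I_s -> 'rV[int]_n) (Delta : {set {set 'I_s}})
    (tau : {set 'I_s}) :=
  Hpoly v (lk Delta tau) (rays_of (lk Delta tau)).

From HB Require Import structures.
From mathcomp Require Import all_boot all_order all_algebra.
Set Implicit Arguments. Unset Strict Implicit. Unset Printing Implicit Defensive.
Local Open Scope ring_scope.
Import GRing.Theory.

(* Every cone of Delta lies in a maximal cone, and lam is a face of that
   cone, so t :|: lam is a cone for every cone t.  Consequently lk gam is the
   join of lk (gam :|: lam) with the full simplex on L = lam :\: gam.  Joining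
   a full simplex does not change H: grouping the cones t of the join by
   t :\: L, each group sums to the term of t :\: L times
   \sum_(mu \subset L) \prod_(i in mu) x_i \prod_(j in L :\: mu) (1 - x_j),
   which is the expansion of \prod_(i in L) (x_i + (1 - x_i)) = 1.  The first
   claim is the case gam = set0, as lk set0 = Delta. *)

Section JoinWithSimplex.
Variables (R : comPzRingType) (I : finType) (x : I -> R).

Definition face_term (V t : {set I}) : R :=
  (\prod_(i in t) x i) * \prod_(j in V :\: t) (1 - x j).

Definition Hsum (S : {set {set I}}) (V : {set I}) : R :=
  \sum_(t in S) face_term V t.

Definition join_simplex (S : {set {set I}}) (L : {set I}) : {set {set I}} :=
  [set t | t :\: L \in S].

Lemma sum_face_term_subset (L : {set I}) :
  \sum_(mu : {set I} | mu \subset L) face_term L mu = 1.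
Proof.
pose F i := if i \in L then x i else 0.
pose G i := if i \in L then 1 - x i else 1.
have FG1 : \prod_i (F i + G i) = 1.
  by rewrite big1 // => i _; rewrite /F /G; case: ifP; rewrite ?subrKC ?add0r.
rewrite -{}FG1 bigA_distr big_mkcond /=; apply: eq_bigr => mu _.
case: ifPn => [muL | /subsetPn[i mu_i iNL]]; last first.
  by rewrite (bigD1 i) //= mu_i /F (negbTE iNL) mul0r.
rewrite (bigID [in mu]) /face_term /=; congr (_ * _).
  by apply: eq_bigr => i mu_i; rewrite mu_i /F (subsetP muL).
rewrite big_mkcond [RHS]big_mkcond; apply: eq_bigr => i _.
by rewrite !inE /G; case: (i \in mu); case: (i \in L).
Qed.

Lemma prod_setU (A B : {set I}) (F : I -> R) : [disjoint A & B] ->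
  \prod_(i in A :|: B) F i = (\prod_(i in A) F i) * \prod_(i in B) F i.
Proof. by move=> AB; rewrite -bigU //; apply: eq_bigl => i; rewrite inE. Qed.

Lemma face_termU (V L g mu : {set I}) :
  [disjoint V & L] -> g \subset V -> mu \subset L ->
  face_term (V :|: L) (g :|: mu) = face_term V g * face_term L mu.
Proof.
move=> VL gV muL; have Vmu := disjointWr muL VL.
have Lg : [disjoint L & g] by rewrite disjoint_sym (disjointWl gV VL).
have gmu : [disjoint g & mu] := disjointWl gV Vmu.
rewrite /face_term setDUl !setDUr (setDidPl Vmu) (setDidPl Lg).
rewrite (setIidPl (subsetDl V g)) (setIidPr (subsetDl L mu)).
have VgLmu : [disjoint V :\: g & L :\: mu].
  exact: disjointWl (subsetDl _ _) (disjointWr (subsetDl _ _) VL).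
by rewrite !prod_setU // mulrACA.
Qed.

Lemma Hsum_join_simplex (S : {set {set I}}) (V L : {set I}) :
  {in S, forall g : {set I}, g \subset V} -> [disjoint V & L] ->
  Hsum (join_simplex S L) (V :|: L) = Hsum S V.
Proof.
move=> SV VL; rewrite /Hsum (partition_big (fun t => t :\: L) [in S]) /=.
  2: by move=> t; rewrite inE.
apply: eq_bigr => g Sg; have gV := SV g Sg; have gL := disjointWl gV VL.
rewrite -[RHS]mulr1 -(sum_face_term_subset L) big_distrr /=.
rewrite (reindex_onto (setU g) (fun t => t :&: L)) /=; last first.
  move=> t /andP[_ /eqP <-]; apply/setP => i; rewrite !inE.
  by case: (i \in t); case: (i \in L).
apply: eq_big => [mu | mu /andP[_ /eqP gmuIL]]; last first.
  by rewrite face_termU // -gmuIL subsetIr.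
apply/idP/idP => [/andP[_ /eqP <-] | muL]; first exact: subsetIr.
have gmuDL : (g :|: mu) :\: L = g.
  by rewrite setDUl (setDidPl gL) (eqP (_ : mu :\: L == set0)) ?setU0 ?setD_eq0.
have gmuIL : (g :|: mu) :&: L = mu.
  by rewrite setIUl (disjoint_setI0 gL) set0U (setIidPl muL).
by rewrite inE gmuDL gmuIL Sg !eqxx.
Qed.

Lemma bigcup_join_simplex (S : {set {set I}}) (L : {set I}) :
  set0 \in S -> {in S, forall g : {set I}, [disjoint g & L]} ->
  \bigcup_(t in join_simplex S L) t = (\bigcup_(g in S) g) :|: L.
Proof.
move=> S0 SL; apply/setP => i; apply/bigcupP/setUP.
  case=> t; rewrite inE => tLS ti; have [iL | iNL] := boolP (i \in L).
    by right.
  by left; apply/bigcupP; exists (t :\: L); rewrite // inE iNL.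
case=> [/bigcupP[g Sg gi] | iL]; [exists g | exists L] => //.
  by rewrite inE (setDidPl (SL g Sg)).
by rewrite inE setDv.
Qed.

End JoinWithSimplex.

Lemma HpolyE (n s : nat) (v : 'I_s -> 'rV[int]_n) S V :
  Hpoly v S V = Hsum (fun i => monom (v i)) S V.
Proof. by []. Qed.

Lemma lk_set0 (s : nat) (Delta : {set {set 'I_s}}) : lk Delta set0 = Delta.
Proof. by apply/setP => t; rewrite inE setI0 setU0 eqxx andbb. Qed.

Lemma rays_of_setT (s : nat) (Delta : {set {set 'I_s}}) :
  (forall i, [set i] \in Delta) -> rays_of Delta = [set: 'I_s].
Proof.
move=> Delta1; apply/setP => i; rewrite inE; apply/bigcupP.
by exists [set i]; rewrite ?set11.
Qed.

Lemma disjoint_lk (s : nat) (Delta : {set {set 'I_s}}) (tau g : {set 'I_s}) :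
  g \in lk Delta tau -> [disjoint g & tau].
Proof. by rewrite inE setI_eq0 => /and3P[]. Qed.

Lemma sub_maximal_cone (s : nat) (Delta : {set {set 'I_s}}) (t : {set 'I_s}) :
  t \in Delta -> exists2 u, maximal_cone Delta u & t \subset u.
Proof.
move=> Dt; pose P u := (u \in Delta) && (t \subset u).
have Pt : P t by rewrite /P Dt subxx.
have [u /andP[Du tu] umax] := arg_maxnP (fun u : {set 'I_s} => #|u|) Pt.
exists u => //; rewrite /maximal_cone Du; apply/forall_inP => u' Du'.
apply/implyP => uu'; rewrite eq_sym eqEcard uu'; apply: umax.
by rewrite /P Du' (subset_trans tu uu').
Qed.

Section LinkOfCommonFace.
Variables (s : nat) (Delta : {set {set 'I_s}}) (lam : {set 'I_s}).
Hypothesis Delta_closed :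
  forall t t' : {set 'I_s}, t \in Delta -> t' \subset t -> t' \in Delta.
Hypothesis lam_in_max : forall t, maximal_cone Delta t -> lam \subset t.

Lemma setU_lam_in t : t \in Delta -> t :|: lam \in Delta.
Proof.
case/sub_maximal_cone => u maxu tu; apply: (Delta_closed (andP maxu).1).
by rewrite subUset tu lam_in_max.
Qed.

Lemma lk_join_simplex gam :
  lk Delta gam = join_simplex (lk Delta (gam :|: lam)) (lam :\: gam).
Proof.
apply/setP => t.
have eqU : (t :\: (lam :\: gam)) :|: (gam :|: lam) = (t :|: gam) :|: lam.
  apply/setP => i; rewrite !inE.
  by case: (i \in t); case: (i \in gam); case: (i \in lam).
have eqI : (t :\: (lam :\: gam)) :&: (gam :|: lam) = t :&: gam.
  apply/setP => i; rewrite !inE.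
  by case: (i \in t); case: (i \in gam); case: (i \in lam).
have Dtgl : (t :|: gam :|: lam \in Delta) = (t :|: gam \in Delta).
  apply/idP/idP => [/Delta_closed-> // | /setU_lam_in //]; exact: subsetUl.
rewrite !inE eqU eqI Dtgl; have [Dtg | _] := boolP (t :|: gam \in Delta).
  have Dt : t \in Delta := Delta_closed Dtg (subsetUl t gam).
  by rewrite Dt (Delta_closed Dt (subsetDl t _)).
by rewrite !andbF.
Qed.

Variables (n : nat) (v : 'I_s -> 'rV[int]_n).

Lemma H_lk_setU_lam gam :
  gam \in Delta -> H_lk v Delta gam = H_lk v Delta (gam :|: lam).
Proof.
move=> Dgam; set S := lk Delta (gam :|: lam); set L := lam :\: gam.
have S0 : set0 \in S.
  by rewrite inE set0I set0U eqxx setU_lam_in // (Delta_closed Dgam (sub0set gam)).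
have SL : {in S, forall g : {set 'I_s}, [disjoint g & L]}.
  move=> g /disjoint_lk; apply: disjointWr.
  exact: subset_trans (subsetDl lam gam) (subsetUr gam lam).
rewrite /H_lk lk_join_simplex /rays_of bigcup_join_simplex // !HpolyE.
apply: Hsum_join_simplex => [g Sg | ]; first exact: bigcup_sup.
by rewrite disjoint_sym; apply: bigcup_disjoint => g /SL; rewrite disjoint_sym.
Qed.

End LinkOfCommonFace.

Theorem lemma2p1 (R : realFieldType) (n m s : nat)
    (w : 'I_m -> 'rV[int]_n) (v : 'I_s -> 'rV[int]_n)
    (Delta : {set {set 'I_s}}) (lam : {set 'I_s}) :
  strongly_convex R w ->
  simplicial_subdivision R w v Delta ->
  lam \in Delta ->
  (forall tau, maximal_cone Delta tau -> lam \subset tau) ->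
  H_Delta v Delta = H_lk v Delta lam /\
  (forall gam, gam \in Delta -> H_lk v Delta gam = H_lk v Delta (gam :|: lam)).
Proof.
move=> _ [_ [Delta1 [Delta_closed _]]] lamD lam_in_max.
have H_lk_lam := H_lk_setU_lam Delta_closed lam_in_max v.
split=> //; have D0 : set0 \in Delta := Delta_closed _ _ lamD (sub0set lam).
by rewrite -[lam]set0U -H_lk_lam // /H_lk lk_set0 rays_of_setT.
Qed.
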